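(* Let $n_1,n_2,n_3\in\mathbb{N}$, let $\sigma$ be a segment label map on $G=\{1,\dots,n_1\}\times\{1,\dots,n_2\}\times\{1,\dots,n_3\}$, fix any decomposition of $T$ into blocks, let $\tau=\mathrm{LABEL}(\sigma,T)$ and let $\tau'$ be the output of the block-wise method. Then $\tau$ and $\tau'$ are isomorphic with respect to the set of all 2-cells of $T$.
   Context: Voxel grid and segmentation: $G=\{1,\dots,n_1\}\times\{1,\dots,n_2\}\times\{1,\dots,n_3\}$; voxels $v,w$ are adjacent iff $\sum_i|v_i-w_i|=1$. A segment label map is $\sigma:G\to\mathbb{N}=\{1,2,\dots\}$ such that each level set $\sigma^{-1}(l)$ is connected w.r.t. this adjacency. Topological grid: $T=\{1,\dots,2n_1-1\}\times\{1,\dots,2n_2-1\}\times\{1,\dots,2n_3-1\}$; a cell with exactly $j$ odd coordinates is a $j$-cell. Voxel $r$ corresponds to the 3-cell $2r-1$. Two cells are 6-neighbors if they differ by $1$ in exactly one coordinate. For a $j$-cell $t$, $\Gamma(t)$ is the set of 6-neighbors of $t$ in $T$ that are $(j+1)$-cells. Cells $t_1,t_2$ are connected, $t_1\leftrightarrow t_2$, iff there is $t\in T$ with $t_1,t_2\in\Gamma(t)$. Procedure LABEL: for a voxel box $\prod_i\{a_i,\dots,b_i\}\subseteq G$ let $B=\prod_i\{2a_i-1,\dots,2b_i-1\}$ be its cell box. $\mathrm{LABEL}(\sigma,B)$ produces $\lambda:B\to\mathbb{N}_0$: (1) $\lambda(2r-1)=\sigma(r)$ for 3-cells. (2) For $j=2,1,0$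 in this order: for each $j$-cell $t\in B$ let $\theta(t)$ be the set of positive integers occurring exactly once in $(\lambda(s))_{s\in\Gamma(t)}$; $t$ is active iff $\theta(t)\ne\emptyset$, inactive $j$-cells get label $0$; the active $j$-cells of $B$ are partitioned into maximal sets of cells with equal $\theta$ that are connected by $\leftrightarrow$-paths inside the set; these classes are numbered $1,\dots,m_j(B)$ arbitrarily and each active $j$-cell gets its class number. Reference labeling: $\tau=\mathrm{LABEL}(\sigma,T)$. Block-wise method: for each axis $i$ choose odd integers $1=a^i_0<\dots<a^i_{m_i}=2n_i-1$; blocks are the boxes $\prod_i\{a^i_{k_i-1},\dots,a^i_{k_i}\}$. Step 1: $\lambda_B=\mathrm{LABEL}(\sigma,B)$ for each block. Step 2: with blocks ordered $B_1,\dots,B_K$, add offset $\sum_{k'<k}m_j(B_{k'})$ to each positive $j$-cell label of $\lambda_{B_k}$ ($j\in\{0,1,2\}$). Step 3: for $j\in\{1,2\}$, via union–find, unite the labels received in different blocks by any active $j$-cell lying in several blocks, and replace every positive $j$-cell label by its set representative. Step 4: for each 0-cell $t_0$ and each pair of distinct 1-cell labels occurring exactly once among the current labels of $\Gamma(t_0)$, merge the two labels if the corresponding 1-cells bound the same set of current 2-cell labels; if any merge took place at $t_0$, recompute the activity of $t_0$ and set its label to $0$ if inactive. The result is $\tau':T\to\mathbb{N}_0$. Isomorphism w.r.t. $U\subseteq T$: for all $u\in U$, $\tau(u)=0\Leftrightarrow\tau'(u)=0$, and for all $u,v\in U$, $\tau(u)=\tau(v)\Leftrightarrow\tau'(u)=\tau'(v)$.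 *)

(* Voxels and cells are triples of nats, using the
   paper's 1-based coordinates. *)
From Stdlib Require Import Relations.Relation_Operators.
From mathcomp Require Import all_boot.

Set Implicit Arguments.
Unset Strict Implicit.
Unset Printing Implicit Defensive.

Definition cell := (nat * nat * nat)%type.

Definition cx (c : cell) := c.1.1.
Definition cy (c : cell) := c.1.2.
Definition cz (c : cell) := c.2.

Definition inbox (b : cell * cell) (c : cell) : bool :=
  [&& b.1.1.1 <= cx c <= b.2.1.1, b.1.1.2 <= cy c <= b.2.1.2
    & b.1.2 <= cz c <= b.2.2].

Definition boxseq (b : cell * cell) : seq cell :=
  [seq (xy, z) | xy <- [seq (x, y) | x <- iota b.1.1.1 (b.2.1.1.+1 - b.1.1.1),
                                      y <- iota b.1.1.2 (b.2.1.2.+1 - b.1.1.2)],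
                 z <- iota b.1.2 (b.2.2.+1 - b.1.2)].

Definition Gbox (n1 n2 n3 : nat) : cell * cell := ((1, 1, 1), (n1, n2, n3)).
Definition Tbox (n1 n2 n3 : nat) : cell * cell :=
  ((1, 1, 1), (2 * n1 - 1, 2 * n2 - 1, 2 * n3 - 1)).

Definition absdiff (a b : nat) := (a - b) + (b - a).

Definition adjacent (v w : cell) : bool :=
  absdiff (cx v) (cx w) + absdiff (cy v) (cy w) + absdiff (cz v) (cz w) == 1.

Fixpoint chain (R : cell -> cell -> Prop) (x : cell) (p : seq cell) : Prop :=
  match p with
  | [::] => True
  | y :: p' => R x y /\ chain R y p'
  end.

Definition segment_label_map (n1 n2 n3 : nat) (sigma : cell -> nat) : Prop :=
  (forall r, inbox (Gbox n1 n2 n3) r -> 0 < sigma r) /\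
  (forall r s, inbox (Gbox n1 n2 n3) r -> inbox (Gbox n1 n2 n3) s ->
     sigma r = sigma s ->
     exists p, chain (fun x y => [/\ adjacent x y, inbox (Gbox n1 n2 n3) y
                                  & sigma y = sigma r]) r p /\ last r p = s).

Definition dim (c : cell) : nat := odd (cx c) + odd (cy c) + odd (cz c).

(* the 3-cell corresponding to voxel r *)
Definition vox (r : cell) : cell := (2 * cx r - 1, 2 * cy r - 1, 2 * cz r - 1).

(* Gamma(t): the 6-neighbours of t in T that are (dim t + 1)-cells *)
Definition gamma (inT : cell -> bool) (c : cell) : seq cell :=
  let: (x, y, z) := c in
  filter inT
   ((if ~~ odd x then [:: (x.+1, y, z); (x.-1, y, z)] else [::]) ++
    (if ~~ odd y then [:: (x, y.+1, z); (x, y.-1, z)] else [::]) ++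
    (if ~~ odd z then [:: (x, y, z.+1); (x, y, z.-1)] else [::])).

Definition conn (inT : cell -> bool) (t1 t2 : cell) : Prop :=
  exists t, [/\ inT t, t1 \in gamma inT t & t2 \in gamma inT t].

(* k \in theta(t), where g = Gamma(t): positive k occurring exactly once *)
Definition theta (lam : cell -> nat) (g : seq cell) (k : nat) : bool :=
  (0 < k) && (count (fun s => lam s == k) g == 1).

Definition active (lam : cell -> nat) (g : seq cell) : bool :=
  has (fun s => theta lam g (lam s)) g.

Definition theta_eq (inT : cell -> bool) (lam : cell -> nat) (t u : cell) : Prop :=
  forall k, theta lam (gamma inT t) k = theta lam (gamma inT u) k.

Definition LABEL_level (inT inB : cell -> bool) (lam : cell -> nat) (j : nat)
  : Prop :=
  let A t := [&& inB t, dim t == j & active lam (gamma inT t)] in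
  let same_class t u :=
    exists p, chain (fun x y => [/\ conn inT x y, A y & theta_eq inT lam t y]) t p
              /\ last t p = u in
  (forall t, inB t -> dim t = j -> ~~ active lam (gamma inT t) -> lam t = 0) /\
  exists m,
    (forall t, A t -> 1 <= lam t <= m) /\
    (forall k, 1 <= k <= m -> exists t, A t /\ lam t = k) /\
    (forall t u, A t -> A u -> (lam t = lam u <-> same_class t u)).

(* lam is a possible output of LABEL(sigma, B) (the numbering of classes
   is arbitrary, so LABEL is a relation) *)
Definition is_LABEL (inT : cell -> bool) (sigma : cell -> nat)
  (inB : cell -> bool) (lam : cell -> nat) : Prop :=
  (forall r, inB (vox r) -> lam (vox r) = sigma r) /\
  (forall j, j < 3 -> LABEL_level inT inB lam j).

(* m_j(B): number of classes = largest j-cell label in B *)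
Definition mj (lam : cell -> nat) (b : cell * cell) (j : nat) : nat :=
  \max_(c <- boxseq b | dim c == j) lam c.

Definition valid_axis (N : nat) (a : seq nat) : bool :=
  [&& head 0 a == 1, last 0 a == 2 * N - 1, sorted ltn a & all odd a].

(* the intervals {a_{k-1},...,a_k}; when m = 0 (only for N = 1) the single
   interval {1} *)
Definition intervals (a : seq nat) : seq (nat * nat) :=
  if a is [:: x] then [:: (x, x)] else zip a (behead a).

Definition blocks (a1 a2 a3 : seq nat) : seq (cell * cell) :=
  [seq ((pq.1.1, pq.2.1, r.1), (pq.1.2, pq.2.2, r.2)) |
     pq <- [seq (p, q) | p <- intervals a1, q <- intervals a2],
     r <- intervals a3].

Definition is_rep (gen : nat -> nat -> Prop) (rep : nat -> nat) : Prop :=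
  (forall x y, gen x y -> rep x = rep y) /\
  (forall x y, rep x = rep y -> clos_refl_sym_trans nat gen x y) /\
  (forall x, clos_refl_sym_trans nat gen x (rep x)).

Definition merge (inT : cell -> bool) (lab : cell -> nat) (p : cell * cell)
  : cell -> nat :=
  fun c => if [&& inT c, dim c == 1 & lab c == lab p.2] then lab p.1 else lab c.

Definition merge_pair (inT : cell -> bool) (lab : cell -> nat) (t0 : cell)
  (s1 s2 : cell) : Prop :=
  let g := gamma inT t0 in
  [/\ [&& s1 \in g, s2 \in g, theta lab g (lab s1), theta lab g (lab s2)
          & lab s1 != lab s2] &
      forall k, (k \in map lab (gamma inT s1)) = (k \in map lab (gamma inT s2))].

Definition process0 (inT : cell -> bool) (t0 : cell) (lab lab' : cell -> nat)
  : Prop :=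
  exists ps : seq (cell * cell),
    (forall p, p \in ps -> merge_pair inT lab t0 p.1 p.2) /\
    (forall s1 s2, merge_pair inT lab t0 s1 s2 ->
        ((s1, s2) \in ps) || ((s2, s1) \in ps)) /\
    let lab1 := foldl (merge inT) lab ps in
    lab' = (fun c => if (c == t0) && (ps != [::]) &&
                        ~~ active lab1 (gamma inT t0)
                     then 0 else lab1 c).

Inductive step4 (inT : cell -> bool) : seq cell -> (cell -> nat) -> (cell -> nat) -> Prop :=
| step4_nil lab : step4 inT [::] lab lab
| step4_cons t0 ord lab lab' lab'' :
    process0 inT t0 lab lab' -> step4 inT ord lab' lab'' ->
    step4 inT (t0 :: ord) lab lab''.

Definition blockwise (n1 n2 n3 : nat) (sigma : cell -> nat) (a1 a2 a3 : seq nat)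
  (tau' : cell -> nat) : Prop :=
  let inT := inbox (Tbox n1 n2 n3) in
  exists (bl : seq (cell * cell)) (lam : nat -> cell -> nat)
         (rep1 rep2 : nat -> nat) (tau3 : cell -> nat) (ord : seq cell)
         (tau4 : cell -> nat),
    let bk k := nth ((0, 0, 0), (0, 0, 0)) bl k in
    let off j k := \sum_(k' < k) mj (lam k') (bk k') j in
    let lam2 k c := if (0 < lam k c) && (dim c < 3)
                    then lam k c + off (dim c) k else lam k c in
    let gen j x y := exists k k' c,
        [/\ [&& k < size bl, k' < size bl, k != k', inbox (bk k) c
               & inbox (bk k') c],
            dim c = j & [/\ 0 < lam2 k c, 0 < lam2 k' c, x = lam2 k c
                                                    & y = lam2 k' c]] in
    perm_eq bl (blocks a1 a2 a3) /\
    (forall k, k < size bl -> is_LABEL inT sigma (inbox (bk k)) (lam k)) /\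
    is_rep (gen 1) rep1 /\ is_rep (gen 2) rep2 /\
    (forall c, inT c -> exists k, [/\ k < size bl, inbox (bk k) c &
        tau3 c = if dim c == 1 then (if 0 < lam2 k c then rep1 (lam2 k c) else 0)
                 else if dim c == 2 then (if 0 < lam2 k c then rep2 (lam2 k c) else 0)
                 else lam2 k c]) /\
    perm_eq ord [seq c <- boxseq (Tbox n1 n2 n3) | dim c == 0] /\
    step4 inT ord tau3 tau4 /\
    (forall c, inT c -> tau' c = tau4 c).

Definition iso_on (U : cell -> bool) (tau tau' : cell -> nat) : Prop :=
  (forall u, U u -> (tau u = 0 <-> tau' u = 0)) /\
  (forall u v, U u -> U v -> (tau u = tau v <-> tau' u = tau' v)).

From Stdlib Require Import Relations.Relation_Operators.
From mathcomp Require Import all_boot zify.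

Set Implicit Arguments.
Unset Strict Implicit.
Unset Printing Implicit Defensive.

(* Step 4 of the block-wise method only touches 1- and 0-cells, so on a 2-cell
   [tau'] is the union-find representative of the offset label that any block
   containing the cell gives it.  Block boundaries are odd, so both voxel
   neighbours of a 2-cell of a block B lie in B: LABEL(sigma, B) and
   LABEL(sigma, T) see the same activity and the same theta at every 2-cell of
   B.  Hence a class path inside B is a class path in T, and conversely two
   consecutive cells of a class path in T lie in a common block (the one
   containing the 1-cell joining them), where they get the same label.  The
   offsets make the label ranges of different blocks disjoint, so every global
   label determines a single value of [tau], and the unions of Step 3 only
   identify labels with the same value. *)

Lemma path_ltn_bounds x s v : path ltn x s -> v \in x :: s -> x <= v <= last x s.
Proof.
elim: s x v => [|y s IH] x v /=; first by rewrite inE => _ /eqP ->; rewrite leqnn.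
move=> /andP [xy ys]; rewrite inE => /orP [/eqP ->|/(IH _ _ ys)]; last lia.
by have := IH y y ys (mem_head _ _); lia.
Qed.

Lemma mem_zip_behead (T : eqType) (x : T) s (p : T * T) :
  p \in zip (x :: s) s -> (p.1 \in x :: s) && (p.2 \in x :: s).
Proof.
elim: s x => [|y s IH] x //=; rewrite inE => /orP [/eqP -> /=|/IH /andP [p1 p2]].
  by rewrite !in_cons !eqxx orbT.
by rewrite p1 orbT in_cons p2 orbT.
Qed.

Lemma intervals_bounds N a (p : nat * nat) : valid_axis N a -> p \in intervals a ->
  [/\ odd p.1, odd p.2, 1 <= p.1 & p.2 <= 2 * N - 1].
Proof.
case: a => [|x s] /and4P [/eqP x1 /eqP sN xs /allP odds] //.
rewrite /= in x1 sN.
have bounds v : v \in x :: s -> [/\ odd v, 1 <= v & v <= 2 * N - 1].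
  by move=> vs; have := path_ltn_bounds xs vs; split; rewrite ?odds //; lia.
case: s {xs odds sN} bounds => [|y s] bounds.
  by rewrite inE => /eqP -> /=; case: (bounds x (mem_head _ _)).
rewrite -[intervals _]/(zip (x :: y :: s) (y :: s)).
by case/mem_zip_behead/andP => /bounds [o1 l1 _] /bounds [o2 _ u2].
Qed.

Lemma zip_cover x s t : x <= t <= last x s -> s != [::] ->
  exists2 p, p \in zip (x :: s) s & p.1 <= t <= p.2.
Proof.
elim: s x => [|y s IH] x //= txs _.
case: (leqP t y) => ty; first by exists (x, y); rewrite ?mem_head //=; lia.
case: s IH txs => [|z s] IH /= txs; first lia.
have [p ps pt] := IH y ltac:(simpl; lia) isT.
by exists p; rewrite // in_cons ps orbT.
Qed.

Lemma intervals_cover N a t : valid_axis N a -> 1 <= t <= 2 * N - 1 ->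
  exists2 p : nat * nat, p \in intervals a & p.1 <= t <= p.2.
Proof.
case: a => [|x s] /and4P [/eqP x1 /eqP sN _ _] // tN; rewrite /= in x1 sN.
case: s sN => [|y s] sN; rewrite /= in sN.
  by exists (x, x); rewrite ?mem_head //=; lia.
rewrite -[intervals _]/(zip (x :: y :: s) (y :: s)).
by apply: zip_cover => //=; lia.
Qed.

Definition axis_step (t v : nat) : Prop :=
  v = t \/ ~~ odd t /\ (v = t.+1 \/ v = t.-1).

Lemma odd_interval_step p1 p2 t v : odd p1 -> odd p2 -> p1 <= t <= p2 ->
  axis_step t v -> p1 <= v <= p2.
Proof. rewrite /axis_step; lia. Qed.

Definition cell_step (t s : cell) : Prop :=
  [/\ axis_step (cx t) (cx s), axis_step (cy t) (cy s) & axis_step (cz t) (cz s)].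

Lemma gamma_step (inT : cell -> bool) t s :
  s \in gamma inT t -> inT s /\ cell_step t s.
Proof.
case: t => [[x y] z]; rewrite /gamma mem_filter => /andP [-> ts]; split => //.
move: ts; rewrite /cell_step /axis_step /cx /cy /cz.
case: (odd x) (odd y) (odd z) => [] [] [] /=; rewrite ?in_nil // !inE;
  by repeat case/orP; move/eqP => -> /=; split; lia.
Qed.

Lemma gamma_dim (inT : cell -> bool) t s : s \in gamma inT t ->
  0 < cx s -> 0 < cy s -> 0 < cz s -> dim s = (dim t).+1.
Proof.
case: t => [[x y] z]; rewrite /gamma mem_filter /dim /cx /cy /cz => /andP [_].
case ox: (odd x); case oy: (odd y); case oz: (odd z); rewrite /= ?in_nil // !inE;
  by repeat case/orP; move/eqP => -> /=; lia.
Qed.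

Definition voxel_of (c : cell) : cell :=
  ((cx c).+1 %/ 2, (cy c).+1 %/ 2, (cz c).+1 %/ 2).

Lemma vox_voxel_of c : dim c = 3 -> vox (voxel_of c) = c.
Proof.
case: c => [[x y] z]; rewrite /dim /vox /voxel_of /cx /cy /cz /= => d3.
congr (_, _, _); lia.
Qed.

Lemma mem_boxseq b c : inbox b c -> c \in boxseq b.
Proof.
case: c => [[x y] z]; rewrite /inbox /boxseq /cx /cy /cz /= => /and3P [xb yb zb].
apply/allpairsP; exists ((x, y), z); split; rewrite //= ?mem_iota; last lia.
by apply/allpairsP; exists (x, y); split; rewrite //= mem_iota; lia.
Qed.

Lemma is_LABEL_3cell inT sigma (inB : cell -> bool) lam c :
  is_LABEL inT sigma inB lam -> inB c -> dim c = 3 -> lam c = sigma (voxel_of c).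
Proof. by move=> [vox_label _] Bc /vox_voxel_of d3; rewrite -{1}d3 vox_label ?d3. Qed.

Lemma eq_in_theta (f h : cell -> nat) g : {in g, f =1 h} -> theta f g =1 theta h g.
Proof.
by move=> fh k; rewrite /theta; congr (_ && (_ == 1)); apply: eq_in_count => s /fh ->.
Qed.

Lemma eq_in_active (f h : cell -> nat) g : {in g, f =1 h} -> active f g = active h g.
Proof. by move=> fh; apply: eq_in_has => s gs; rewrite fh // (eq_in_theta fh). Qed.

Definition class_path (inT inB : cell -> bool) (lam : cell -> nat) (j : nat)
  (t u : cell) : Prop :=
  exists p, chain (fun x y => [/\ conn inT x y,
                   [&& inB y, dim y == j & active lam (gamma inT y)]
                 & theta_eq inT lam t y]) t p /\ last t p = u.

Lemma LABEL_level_active inT inB lam j t : LABEL_level inT inB lam j ->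
  inB t -> dim t = j -> (0 < lam t) = active lam (gamma inT t).
Proof.
move=> [zero [m [range _]]] Bt tj; apply/idP/idP => [lam_gt0|act].
  by apply: contraLR lam_gt0 => /(zero t Bt tj) ->.
by case/andP: (range t ltac:(by rewrite Bt tj eqxx act)).
Qed.

Lemma LABEL_level_class inT inB lam j t u : LABEL_level inT inB lam j ->
  inB t -> inB u -> dim t = j -> dim u = j -> 0 < lam t -> 0 < lam u ->
  lam t = lam u <-> class_path inT inB lam j t u.
Proof.
move=> L Bt Bu tj uj; rewrite !(LABEL_level_active L) // => act_t act_u.
by case: L => _ [m [_ [_ cls]]]; apply: cls; rewrite /= ?Bt ?Bu ?tj ?uj ?eqxx.
Qed.

Lemma chain_impl (R R' : cell -> cell -> Prop) x p :
  (forall a b, R a b -> R' a b) -> chain R x p -> chain R' x p.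
Proof. by move=> RR'; elim: p x => [|y p IH] x //= [/RR' xy /IH]. Qed.

Lemma chain_last_eq (P : cell -> Prop) (R : cell -> cell -> Prop) (f : cell -> nat) x p :
  (forall a b, P a -> R a b -> P b /\ f b = f a) -> P x -> chain R x p ->
  f (last x p) = f x.
Proof.
move=> step; elim: p x => [|y p IH] x //= Px [/(step _ _ Px) [Py <-]].
exact: IH.
Qed.

Lemma iso_onP (U : cell -> bool) (f g : cell -> nat) :
  (forall u, U u -> f u = 0 <-> g u = 0) ->
  (forall u v, U u -> U v -> 0 < f u -> 0 < f v -> f u = f v <-> g u = g v) ->
  iso_on U f g.
Proof.
move=> zero pos; split=> // u v Uu Uv.
have [zu zv] := (zero u Uu, zero v Uv).
case: (posnP (f u)) => [u0|u_gt0]; case: (posnP (f v)) => [v0|v_gt0].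
- by rewrite u0 v0 zu.1 ?zv.1.
- by rewrite u0 zu.1 //; split=> [/esym|/esym/zv.2]; lia.
- by rewrite v0 zv.1 //; split=> [|/zu.2]; lia.
- exact: pos.
Qed.

Lemma iso_on_eq_in (U : cell -> bool) (f g h : cell -> nat) :
  iso_on U f g -> (forall u, U u -> h u = g u) -> iso_on U f h.
Proof.
move=> [zero cls] hg; split=> [u Uu|u v Uu Uv]; rewrite ?hg //.
  exact: zero.
exact: cls.
Qed.

Lemma foldl_merge_id (inT : cell -> bool) ps lab c :
  dim c != 1 -> foldl (merge inT) lab ps c = lab c.
Proof.
by move=> c1; elim: ps lab => [|p ps IH] lab //=; rewrite IH /merge (negbTE c1) andbF.
Qed.

Lemma step4_id (inT : cell -> bool) ord lab lab' : step4 inT ord lab lab' ->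
  forall c, c \notin ord -> dim c != 1 -> lab' c = lab c.
Proof.
elim=> {ord lab lab'} // t0 ord lab lab' lab'' [ps [_ [_ ->]]] _ IH c.
rewrite in_cons negb_or => /andP [ct0 c_ord] c1.
by rewrite IH //= (negbTE ct0) /= foldl_merge_id.
Qed.

Section Blocks.

Variables (n1 n2 n3 : nat) (a1 a2 a3 : seq nat) (bl : seq (cell * cell)).
Hypotheses (axis1 : valid_axis n1 a1) (axis2 : valid_axis n2 a2)
  (axis3 : valid_axis n3 a3).
Hypothesis bl_blocks : perm_eq bl (blocks a1 a2 a3).
Local Notation inT := (inbox (Tbox n1 n2 n3)).

Definition block k := nth ((0, 0, 0), (0, 0, 0)) bl k.

Lemma block_intervals k : k < size bl -> exists p q r : nat * nat,
  [/\ p \in intervals a1, q \in intervals a2, r \in intervals a3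
    & block k = ((p.1, q.1, r.1), (p.2, q.2, r.2))].
Proof.
rewrite /block => /(mem_nth ((0, 0, 0), (0, 0, 0))); rewrite (perm_mem bl_blocks).
case/allpairsP => [[pq r] [/allpairsP [[p q] [/= p1 q2 ->]] r3 ->]].
by exists p, q, r.
Qed.

Lemma block_inT k c : k < size bl -> inbox (block k) c -> inT c.
Proof.
case/block_intervals => p [q [r [/(intervals_bounds axis1) [_ _ p1 p2]
  /(intervals_bounds axis2) [_ _ q1 q2] /(intervals_bounds axis3) [_ _ r1 r2] ->]]].
rewrite /inbox /= => /and3P [/andP [? ?] /andP [? ?] /andP [? ?]].
by apply/and3P; split; apply/andP; split; lia.
Qed.

Lemma block_step_closed k t s : k < size bl -> inbox (block k) t ->
  cell_step t s -> inbox (block k) s.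
Proof.
case/block_intervals => p [q [r [/(intervals_bounds axis1) [op1 op2 _ _]
  /(intervals_bounds axis2) [oq1 oq2 _ _] /(intervals_bounds axis3) [or1 or2 _ _] ->]]].
rewrite /inbox /= => /and3P [tx ty tz] [sx sy sz].
by apply/and3P; split; apply: odd_interval_step; eassumption.
Qed.

Lemma block_of_cell t : inT t -> exists2 k, k < size bl & inbox (block k) t.
Proof.
rewrite /inbox /= => /and3P [tx ty tz].
have [p p1 pt] := intervals_cover axis1 tx.
have [q q2 qt] := intervals_cover axis2 ty.
have [r r3 rt] := intervals_cover axis3 tz.
set B := ((p.1, q.1, r.1), (p.2, q.2, r.2)).
have B_bl : B \in bl.
  rewrite (perm_mem bl_blocks); apply/allpairsP; exists ((p, q), r); split => //.
  by apply/allpairsP; exists (p, q).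
exists (index B bl); first by rewrite index_mem.
by rewrite /block nth_index //= /inbox /= pt qt rt.
Qed.

Lemma block_common t x y : inT t -> cell_step t x -> cell_step t y ->
  exists2 k, k < size bl & inbox (block k) x && inbox (block k) y.
Proof.
move=> /block_of_cell [k kbl Bt] tx ty.
by exists k; rewrite ?(block_step_closed kbl Bt tx) ?(block_step_closed kbl Bt ty).
Qed.

Variables (sigma tau : cell -> nat) (lam : nat -> cell -> nat).
Hypothesis tau_LABEL : is_LABEL inT sigma inT tau.
Hypothesis lam_LABEL :
  forall k, k < size bl -> is_LABEL inT sigma (inbox (block k)) (lam k).

Lemma block_label_gamma k c : k < size bl -> inbox (block k) c -> dim c = 2 ->
  {in gamma inT c, lam k =1 tau}.
Proof.
move=> kbl Bc c2 s cs; have [Ts /(block_step_closed kbl Bc) Bs] := gamma_step cs.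
have s3 : dim s = 3.
  by move: (Ts); rewrite /inbox /= => /and3P [? ? ?]; rewrite (gamma_dim cs) ?c2 //; lia.
by rewrite (is_LABEL_3cell (lam_LABEL kbl) Bs s3) (is_LABEL_3cell tau_LABEL Ts s3).
Qed.

Lemma block_active k c : k < size bl -> inbox (block k) c -> dim c = 2 ->
  active (lam k) (gamma inT c) = active tau (gamma inT c).
Proof. by move=> kbl Bc c2; apply/eq_in_active/block_label_gamma. Qed.

Lemma block_theta k c : k < size bl -> inbox (block k) c -> dim c = 2 ->
  theta (lam k) (gamma inT c) =1 theta tau (gamma inT c).
Proof. by move=> kbl Bc c2; apply/eq_in_theta/block_label_gamma. Qed.

Lemma block_label_gt0 k c : k < size bl -> inbox (block k) c -> dim c = 2 ->
  (0 < lam k c) = (0 < tau c).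
Proof.
move=> kbl Bc c2; rewrite (LABEL_level_active ((lam_LABEL kbl).2 2 isT)) //.
by rewrite (LABEL_level_active (tau_LABEL.2 2 isT)) ?(block_inT kbl Bc) ?block_active.
Qed.

Lemma block_label_tau k c d : k < size bl -> inbox (block k) c ->
  inbox (block k) d -> dim c = 2 -> dim d = 2 -> 0 < lam k c ->
  lam k c = lam k d -> tau c = tau d.
Proof.
move=> kbl Bc Bd c2 d2 c_gt0 cd; have d_gt0 : 0 < lam k d by rewrite -cd.
have [p [path_p last_p]] :=
  (LABEL_level_class ((lam_LABEL kbl).2 2 isT) Bc Bd c2 d2 c_gt0 d_gt0).1 cd.
apply/(LABEL_level_class (tau_LABEL.2 2 isT) (block_inT kbl Bc) (block_inT kbl Bd) c2 d2).
- by rewrite -(block_label_gt0 kbl Bc c2).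
- by rewrite -(block_label_gt0 kbl Bd d2).
exists p; split => //; apply: chain_impl path_p => x y [xy /and3P [By /eqP y2 act_y] th].
split => //; first by rewrite (block_inT kbl By) y2 eqxx -(block_active kbl By y2).
by move=> i; rewrite -(block_theta kbl Bc c2) -(block_theta kbl By y2).
Qed.

Lemma block_label_conn k x y : k < size bl -> inbox (block k) x ->
  inbox (block k) y -> dim x = 2 -> dim y = 2 -> 0 < tau x -> 0 < tau y ->
  conn inT x y -> theta_eq inT tau x y -> lam k x = lam k y.
Proof.
move=> kbl Bx By x2 y2 x_gt0 y_gt0 xy th.
apply/(LABEL_level_class ((lam_LABEL kbl).2 2 isT)); rewrite ?block_label_gt0 //.
exists [:: y]; split => //=; split => //; split => //.
  by rewrite By y2 eqxx block_active // -(LABEL_level_active (tau_LABEL.2 2 isT))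
    ?(block_inT kbl By).
by move=> i; rewrite (block_theta kbl Bx x2) (block_theta kbl By y2).
Qed.

(* [offset], [glabel] and [block_merge] are the [off], [lam2] and [gen] of
   [blockwise]. *)
Definition offset j k := \sum_(k' < k) mj (lam k') (block k') j.

Definition glabel k c :=
  if (0 < lam k c) && (dim c < 3) then lam k c + offset (dim c) k else lam k c.

Definition block_merge j x y := exists k k' c,
  [/\ [&& k < size bl, k' < size bl, k != k', inbox (block k) c
         & inbox (block k') c],
      dim c = j & [/\ 0 < glabel k c, 0 < glabel k' c,
                      x = glabel k c & y = glabel k' c]].

Lemma glabel_gt0 k c : (0 < glabel k c) = (0 < lam k c).
Proof.
by rewrite /glabel; case: ifP => // /andP [c_gt0 _]; rewrite c_gt0 (ltn_addr _ c_gt0).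
Qed.

Lemma glabel2 k c : 0 < lam k c -> dim c = 2 -> glabel k c = lam k c + offset 2 k.
Proof. by move=> c_gt0 c2; rewrite /glabel c_gt0 c2. Qed.

Lemma label_le_mj k c j : inbox (block k) c -> dim c = j ->
  lam k c <= mj (lam k) (block k) j.
Proof. by move=> Bc cj; apply: (leq_bigmax_seq c (mem_boxseq Bc)); rewrite cj. Qed.

Lemma offset_mj_leq j k k' :
  k < k' -> offset j k + mj (lam k) (block k) j <= offset j k'.
Proof.
move=> kk'; rewrite /offset -!(big_mkord xpredT (fun i => mj (lam i) (block i) j)).
by rewrite -big_nat_recr //= [X in _ <= X](@big_cat_nat _ _ _ k.+1) //= leq_addr.
Qed.

Definition label_tau x v := exists k c,
  [/\ k < size bl, inbox (block k) c, dim c = 2, 0 < lam k c & x = glabel k c]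
  /\ tau c = v.

(* Offsets separate the label ranges of different blocks, so two cells
   carrying the same label get it from the same block. *)
Lemma label_tau_fun x v w : label_tau x v -> label_tau x w -> v = w.
Proof.
move=> [k [c [[kbl Bc c2 c_gt0 ->] <-]]] [k' [d [[kbl' Bd d2 d_gt0]]]].
rewrite !glabel2 // => cd <-.
have := label_le_mj Bc c2; have := label_le_mj Bd d2.
case: (ltngtP k k') => [kk'|k'k|kk'].
- by have := offset_mj_leq 2 kk'; lia.
- by have := offset_mj_leq 2 k'k; lia.
- by subst k'; move=> _ _; apply: (block_label_tau kbl Bc Bd c2 d2 c_gt0); lia.
Qed.

Lemma label_tau_glabel k c : k < size bl -> inbox (block k) c -> dim c = 2 ->
  0 < tau c -> label_tau (glabel k c) (tau c).
Proof. by move=> kbl Bc c2 c_gt0; exists k, c; split; split; rewrite ?block_label_gt0. Qed.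

Lemma label_tau_gt0 x v : label_tau x v -> 0 < x.
Proof. by move=> [k [c [[_ _ _ c_gt0 ->] _]]]; rewrite glabel_gt0. Qed.

Lemma block_merge_label_tau x y : block_merge 2 x y ->
  exists v, label_tau x v /\ label_tau y v.
Proof.
move=> [k [k' [c [/and5P [kbl k'bl _ Bc B'c] c2 [x_gt0 y_gt0 -> ->]]]]].
rewrite !glabel_gt0 in x_gt0 y_gt0.
by exists (tau c); split; [exists k, c | exists k', c].
Qed.

Lemma merged_label_tau x y : clos_refl_sym_trans nat (block_merge 2) x y ->
  forall v, label_tau x v <-> label_tau y v.
Proof.
elim=> {x y} [x y /block_merge_label_tau [w [xw yw]]|x|x y _ IH|x y z _ xy _ yz] v //.
- by split=> [/(label_tau_fun xw) <-|/(label_tau_fun yw) <-].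
- exact: iff_sym (IH v).
- exact: iff_trans (xy v) (yz v).
Qed.

Variables (rep2 : nat -> nat) (tau3 : cell -> nat).
Hypothesis rep2_union : is_rep (block_merge 2) rep2.
Hypothesis tau3_2cell : forall c, inT c -> dim c = 2 -> exists k,
  [/\ k < size bl, inbox (block k) c
    & tau3 c = if 0 < glabel k c then rep2 (glabel k c) else 0].

Lemma tau3_rep u k : inT u -> dim u = 2 -> 0 < tau u -> k < size bl ->
  inbox (block k) u -> tau3 u = rep2 (glabel k u).
Proof.
move=> Tu u2 u_gt0 kbl Bu; have [k0 [k0bl Bu0 ->]] := tau3_2cell Tu u2.
rewrite glabel_gt0 block_label_gt0 // u_gt0.
case: (eqVneq k0 k) => [-> //|k0k]; apply: rep2_union.1.
exists k0, k, u; split; rewrite ?k0bl ?kbl ?k0k ?Bu0 ?Bu //.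
by rewrite !glabel_gt0 !block_label_gt0.
Qed.

Lemma tau3_eq0 u : inT u -> dim u = 2 -> tau u = 0 <-> tau3 u = 0.
Proof.
move=> Tu u2; case: (posnP (tau u)) => [u0|u_gt0].
  have [k [kbl Bu ->]] := tau3_2cell Tu u2.
  by rewrite glabel_gt0 block_label_gt0 // u0.
have [k kbl Bu] := block_of_cell Tu.
rewrite (tau3_rep Tu u2 u_gt0 kbl Bu).
have /(merged_label_tau (rep2_union.2.2 _))/label_tau_gt0 :=
  label_tau_glabel kbl Bu u2 u_gt0.
lia.
Qed.

Lemma tau3_conn x y : inT x -> inT y -> dim x = 2 -> dim y = 2 ->
  0 < tau x -> 0 < tau y -> conn inT x y -> theta_eq inT tau x y ->
  tau3 x = tau3 y.
Proof.
move=> Tx Ty x2 y2 x_gt0 y_gt0 xy th; have [t [Tt xt yt]] := xy.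
have [k kbl /andP [Bx By]] :=
  block_common Tt (gamma_step xt).2 (gamma_step yt).2.
rewrite (tau3_rep Tx x2 x_gt0 kbl Bx) (tau3_rep Ty y2 y_gt0 kbl By).
by rewrite /glabel (block_label_conn kbl Bx By x2 y2 x_gt0 y_gt0 xy th) x2 y2.
Qed.

Lemma tau3_class u v : inT u -> inT v -> dim u = 2 -> dim v = 2 ->
  0 < tau u -> 0 < tau v -> tau u = tau v <-> tau3 u = tau3 v.
Proof.
move=> Tu Tv u2 v2 u_gt0 v_gt0.
have [ku kubl Bu] := block_of_cell Tu.
have [kv kvbl Bv] := block_of_cell Tv.
have cls := LABEL_level_class (tau_LABEL.2 2 isT) Tu Tv u2 v2 u_gt0 v_gt0.
split=> [/cls [p [path_p <-]]|].
  pose P c := [/\ inT c, dim c = 2, 0 < tau c & theta_eq inT tau u c].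
  symmetry; apply: (chain_last_eq (P := P) _ _ path_p) => //.
  move=> c d [Tc c2 c_gt0 th_c] [cd /and3P [Td /eqP d2 act_d] th_d].
  have d_gt0 : 0 < tau d by rewrite (LABEL_level_active (tau_LABEL.2 2 isT)).
  split => //; apply/esym/(tau3_conn Tc Td c2 d2 c_gt0 d_gt0 cd) => i.
  by rewrite -th_c -th_d.
rewrite (tau3_rep Tu u2 u_gt0 kubl Bu) (tau3_rep Tv v2 v_gt0 kvbl Bv).
move=> /(rep2_union.2.1) /merged_label_tau uv.
apply: label_tau_fun (label_tau_glabel kvbl Bv v2 v_gt0).
exact/uv/label_tau_glabel.
Qed.

Lemma iso_tau3 : iso_on (fun c => inT c && (dim c == 2)) tau tau3.
Proof.
apply: iso_onP => [u /andP [Tu /eqP u2]|u v /andP [Tu /eqP u2] /andP [Tv /eqP v2]].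
  exact: tau3_eq0.
exact: tau3_class.
Qed.

End Blocks.

Theorem proposition2 (n1 n2 n3 : nat) (sigma : cell -> nat)
  (a1 a2 a3 : seq nat) (tau tau' : cell -> nat) :
  0 < n1 -> 0 < n2 -> 0 < n3 ->
  segment_label_map n1 n2 n3 sigma ->
  valid_axis n1 a1 -> valid_axis n2 a2 -> valid_axis n3 a3 ->
  is_LABEL (inbox (Tbox n1 n2 n3)) sigma (inbox (Tbox n1 n2 n3)) tau ->
  blockwise n1 n2 n3 sigma a1 a2 a3 tau' ->
  iso_on (fun c => inbox (Tbox n1 n2 n3) c && (dim c == 2)) tau tau'.
Proof.
move=> _ _ _ _ axis1 axis2 axis3 tau_LABEL.
move=> [bl [lam [rep1 [rep2 [tau3 [ord [tau4 [bl_blocks [lam_LABEL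
  [_ [rep2_union [tau3_def [ord_0cells [step4_tau4 tau'_tau4]]]]]]]]]]]]]].
apply: iso_on_eq_in (iso_tau3 axis1 axis2 axis3 bl_blocks tau_LABEL lam_LABEL
  rep2_union (tau3 := tau3) _) _.
  move=> c Tc c2; have [k [kbl Bc ->]] := tau3_def c Tc.
  by exists k; rewrite /glabel c2.
move=> c /andP [Tc /eqP c2]; rewrite tau'_tau4 // (step4_id step4_tau4) ?c2 //.
by rewrite (perm_mem ord_0cells) mem_filter c2.
Qed.
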